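(* Let $n,k,\delta$ be positive integers with $k<n$ and $(n-k)\mid\delta$, and set $M=\max\{n-k,k\}$ and $L=\lfloor \delta/k\rfloor+\delta/(n-k)$. Let $\mathbb{F}$ be a finite field of characteristic $p$ and let $\alpha$ be a primitive element of $\mathbb{F}$. For $\ell=0,1,\dots,L$ let $T_\ell\in\mathbb{F}^{M\times M}$ be the matrix whose $(i,j)$ entry ($1\le i,j\le M$) is $$(T_\ell)_{ij}=\alpha^{2^{M\ell+(i-1)+(j-1)}},$$ and let $\mathcal{T}(T_0,\dots,T_L)\in\mathbb{F}^{(L+1)M\times(L+1)M}$ be the lower block triangular block Toeplitz matrix $$\mathcal{T}(T_0,\dots,T_L)=\begin{pmatrix} T_0 & 0 & \cdots & 0\\ T_1 & T_0 & \cdots & 0\\ \vdots & \vdots & \ddots & \vdots\\ T_L & T_{L-1} & \cdots & T_0\end{pmatrix}.$$ If $|\mathbb{F}|\ge p^{\left(2^{M(L+2)-1}\right)}$, then $\mathcal{T}(T_0,\dots,T_L)$ is superregular over $\mathbb{F}$.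
   Context: For a square matrix $A=[\mu_{ij}]$ of order $m$, $|A|=\sum_{\sigma\in S_m}(-1)^{\mathrm{sgn}(\sigma)}\mu_{1\sigma(1)}\cdots\mu_{m\sigma(m)}$; a term $\mu_{1\sigma(1)}\cdots\mu_{m\sigma(m)}$ is called trivial if $\mu_{i\sigma(i)}=0$ for some $i$. If $A$ is a square submatrix of a matrix $B$ and all terms of the determinant of $A$ are trivial, then $|A|$ is called a trivial minor of $B$. A matrix $B$ is called superregular if all its non-trivial minors are nonzero. *)

From mathcomp Require Import all_boot all_order all_algebra all_fingroup.
Set Implicit Arguments. Unset Strict Implicit. Unset Printing Implicit Defensive.
Import GRing.Theory.
Local Open Scope ring_scope.

Definition submx_of (R : Type) (m n r : nat) (f : 'I_r -> 'I_m) (g : 'I_r -> 'I_n)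
  (B : 'M[R]_(m, n)) : 'M[R]_r := \matrix_(i < r, j < r) B (f i) (g j).

(* the minor |A| is non-trivial iff some term of the Leibniz expansion has
   no zero factor *)
Definition nontrivial_minor (R : nzRingType) (r : nat) (A : 'M[R]_r) : Prop :=
  exists s : 'S_r, forall i : 'I_r, A i (s i) != 0.

Definition superregular (R : nzRingType) (m n : nat) (B : 'M[R]_(m, n)) : Prop :=
  forall (r : nat) (f : 'I_r -> 'I_m) (g : 'I_r -> 'I_n),
    (forall i j : 'I_r, (i < j)%N -> (f i < f j)%N) ->
    (forall i j : 'I_r, (i < j)%N -> (g i < g j)%N) ->
    nontrivial_minor (submx_of f g B) -> \det (submx_of f g B) != 0.

Definition primitive_element (F : finFieldType) (a : F) : bool :=
  (#|F|.-1).-primitive_root a.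

(* (T_l)_(i,j) with 0-indexed i, j < M:  alpha ^ (2 ^ (M l + i + j)) *)
Definition Tentry (F : fieldType) (alpha : F) (M l i j : nat) : F :=
  alpha ^+ (2 ^ (M * l + i + j)).

Definition Tblock (F : fieldType) (alpha : F) (M l : nat) : 'M[F]_M :=
  \matrix_(i < M, j < M) Tentry alpha M l i j.

(* lower block triangular block Toeplitz matrix T(T_0,...,T_L), (L+1) x (L+1)
   blocks of size M x M; (0-indexed) block (a, b) is T_(a-b) if b <= a, else 0.
   Global index i corresponds to block i %/ M, position i %% M inside the block. *)
Definition block_toeplitz (F : fieldType) (alpha : F) (M L : nat) :
  'M[F]_((L.+1) * M) :=
  \matrix_(i < (L.+1) * M, j < (L.+1) * M)
    if (j %/ M <= i %/ M)%N
    then Tentry alpha M (i %/ M - j %/ M) (i %% M) (j %% M)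
    else 0.

(* Entry [(a, c)] of a square submatrix with rows [f] and columns [g] is either [0] or
   [alpha ^+ 2 ^ e a c], where on the support [e a c + M L = f a + w (g c)] with an injective
   column weight [w], and the support only grows with the row index.  So the determinant is
   [P alpha] for the integer polynomial [P = \sum_s sign s * X ^ (\sum_a 2 ^ e a (s a))], [s]
   ranging over the permutations inside the support.  Swapping the images of two rows so as to
   undo an inversion of [w \o s] strictly increases the exponent (rearrangement inequality), and
   at most one permutation in the support admits no such swap; hence the top exponent is reached
   once and [P] has leading coefficient [-1] or [1].  If [P alpha = 0], every element of [F] is
   an [F_p]-combination of [1, alpha, ..., alpha ^ (deg P - 1)], so [#|F| <= p ^ deg P]; but
   [deg P < 2 ^ (M (L + 2) - 1)]. *)

From mathcomp Require Import all_boot all_order all_algebra all_fingroup.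
From mathcomp Require Import finfield zify.
Set Implicit Arguments. Unset Strict Implicit. Unset Printing Implicit Defensive.
Import GRing.Theory.

Lemma rearrangement_ltn (a b c d : nat) : a < b -> c < d -> a * d + b * c < a * c + b * d.
Proof. by move=> ab cd; nia. Qed.

Lemma bigD1_pair (I : finType) (h : I -> nat) (a b : I) : a != b ->
  \sum_i h i = h a + h b + \sum_(i | (i != a) && (i != b)) h i.
Proof.
move=> ab; rewrite (bigD1 a) //= (bigD1 b) /=; last by rewrite eq_sym.
by rewrite addnA.
Qed.

Definition exp2_sum (r : nat) (E : 'I_r -> 'I_r -> nat) (s : 'S_r) := \sum_i 2 ^ E i (s i).

Section ExchangeArgument.
Variables (r : nat) (x w : 'I_r -> nat) (supp : 'I_r -> 'I_r -> bool).
Hypothesis x_incr : forall a b : 'I_r, a < b -> x a < x b.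
Hypothesis w_inj : injective w.
Hypothesis supp_mono : forall a b c : 'I_r, a <= b -> supp a c -> supp b c.

Definition admissible (s : 'S_r) := [forall i, supp i (s i)].

Local Notation weight := (exp2_sum (fun i j => x i + w j)).

Definition swap_blocked (s : 'S_r) :=
  forall a b : 'I_r, a < b -> w (s b) < w (s a) -> ~~ supp a (s b).

Lemma max_weight_swap_blocked s : admissible s ->
  (forall t, admissible t -> weight t <= weight s) -> swap_blocked s.
Proof.
move=> /forallP adm_s s_max a b ab w_ba; apply/negP => supp_ab.
have a_neq_b : a != b by rewrite neq_ltn ab.
pose t := (tperm a b * s)%g.
have t_a : t a = s b by rewrite permM tpermL.
have t_b : t b = s a by rewrite permM tpermR.
have t_other i : i != a -> i != b -> t i = s i.
  by move=> ia ib; rewrite permM tpermD // eq_sym.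
have adm_t : admissible t.
  apply/forallP => i.
  have [->|ia] := eqVneq i a; first by rewrite t_a.
  have [->|ib] := eqVneq i b; first by rewrite t_b (supp_mono (ltnW ab)).
  by rewrite t_other.
have := s_max t adm_t; rewrite /exp2_sum (@bigD1_pair _ _ _ _ a_neq_b).
rewrite [X in _ <= X](@bigD1_pair _ _ _ _ a_neq_b) t_a t_b.
rewrite (eq_bigr (fun i => 2 ^ (x i + w (s i)))); last first.
  by move=> i /andP[ia ib]; rewrite t_other.
rewrite leqNgt => /negP; apply; rewrite !expnD ltn_add2r.
by apply: rearrangement_ltn; rewrite ltn_exp2l // x_incr.
Qed.

Lemma swap_blocked_unique s1 s2 : admissible s1 -> admissible s2 ->
  swap_blocked s1 -> swap_blocked s2 -> s1 = s2.
Proof.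
suff first_diff_lt (t1 t2 : 'S_r) (a : 'I_r) : (forall b : 'I_r, b < a -> t1 b = t2 b) ->
    t1 a != t2 a -> w (t1 a) < w (t2 a) -> admissible t1 -> swap_blocked t2 -> False.
  move=> adm1 adm2 bl1 bl2; apply/permP => i; apply/eqP; apply/negPn/negP => ne.
  have [a neq_a a_min] := arg_minnP (P := fun a => s1 a != s2 a) (nat_of_ord (n := r)) ne.
  have eq_lt (b : 'I_r) : b < a -> s1 b = s2 b.
    by move=> ba; apply/eqP; apply/negPn/negP => /a_min; rewrite leqNgt ba.
  have : w (s1 a) != w (s2 a) by apply: contra neq_a => /eqP /w_inj ->.
  case: ltngtP => // w_lt _; first exact: (first_diff_lt s1 s2 a).
  by apply: (first_diff_lt s2 s1 a) => // [b /eq_lt ->|]; rewrite // eq_sym.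
move=> eq_lt neq_a w_lt /forallP adm1 bl2.
pose b := (t2^-1)%g (t1 a); have t2_b : t2 b = t1 a by rewrite permKV.
have b_neq_a : b != a by apply: contraNneq neq_a => ba; rewrite -t2_b ba.
have ab : a < b.
  rewrite ltn_neqAle eq_sym b_neq_a leqNgt; apply/negP => /eq_lt.
  by rewrite t2_b => /perm_inj ab; rewrite ab eqxx in b_neq_a.
by have := bl2 a b ab; rewrite t2_b w_lt adm1 => /(_ isT).
Qed.

Lemma max_weight_unique s1 s2 : admissible s1 -> admissible s2 ->
  (forall t, admissible t -> weight t <= weight s1) ->
  (forall t, admissible t -> weight t <= weight s2) -> s1 = s2.
Proof.
by move=> adm1 adm2 max1 max2; apply: swap_blocked_unique => //; apply: max_weight_swap_blocked.
Qed.

End ExchangeArgument.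

Lemma incr_ord_inj (r m : nat) (f : 'I_r -> 'I_m) :
  (forall i j : 'I_r, i < j -> f i < f j) -> injective f.
Proof.
move=> f_incr i j eq_f; apply/val_inj.
by case: (ltngtP i j) => // /f_incr; rewrite eq_f ltnn.
Qed.

Lemma sum_exp2_inj_lt (r N d : nat) (f : 'I_r -> 'I_N) (E : 'I_r -> nat) :
  injective f -> (forall i, E i <= f i + d) -> \sum_i 2 ^ E i < 2 ^ (N + d).
Proof.
move=> f_inj E_le; apply: (@leq_ltn_trans (\sum_i 2 ^ (f i + d))).
  by apply: leq_sum => i _; rewrite leq_exp2l.
rewrite expnD (eq_bigr (fun i => 2 ^ f i * 2 ^ d)) => [|i _]; last by rewrite expnD.
rewrite -big_distrl ltn_mul2r expn_gt0 /=.
rewrite -(big_imset (fun k : 'I_N => 2 ^ k)) /=; last by move=> a b _ _ /f_inj.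
apply: (@leq_ltn_trans (\sum_(k < N) 2 ^ k)).
  by rewrite [X in _ <= X](bigID (mem [set f x | x in xpredT])) leq_addr.
elim: N {f f_inj E_le} => [|N IH]; first by rewrite big_ord0.
by rewrite big_ord_recr /= expnS mul2n -addnn ltn_add2r.
Qed.

Definition col_weight (M L j : nat) := j %% M + M * (L - j %/ M).

Section BlockToeplitzExponents.
Variables (M L : nat).
Hypothesis M_gt0 : 0 < M.

Lemma col_weight_inj j1 j2 : j1 < L.+1 * M -> j2 < L.+1 * M ->
  col_weight M L j1 = col_weight M L j2 -> j1 = j2.
Proof.
move=> lt1 lt2 eq_w.
have blk_le j : j < L.+1 * M -> j %/ M <= L by move=> ?; rewrite -ltnS ltn_divLR.
have eq_mod : j1 %% M = j2 %% M.
  by have := congr1 (modn^~ M) eq_w; rewrite /col_weight !(addnC (_ %% M)) !(mulnC M) !modnMDl !modn_mod.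
have eq_div : L - j1 %/ M = L - j2 %/ M.
  have := congr1 (divn^~ M) eq_w; rewrite /col_weight !(addnC (_ %% M)) !(mulnC M) !divnMDl //.
  by rewrite !(divn_small (ltn_pmod _ M_gt0)) !addn0.
have eq_blk : j1 %/ M = j2 %/ M by have := blk_le _ lt1; have := blk_le _ lt2; lia.
by rewrite (divn_eq j1 M) (divn_eq j2 M) eq_mod eq_blk.
Qed.

Lemma block_toeplitz_exponent_shift i j : j < L.+1 * M -> j %/ M <= i %/ M ->
  M * (i %/ M - j %/ M) + i %% M + j %% M + M * L = i + col_weight M L j.
Proof.
move=> lt_j le_blk; have blk_j : j %/ M <= L by rewrite -ltnS ltn_divLR.
rewrite /col_weight {3}(divn_eq i M) (mulnC (i %/ M)) !mulnBr.
have := leq_mul2l M (j %/ M) (i %/ M); have := leq_mul2l M (j %/ M) L.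
by rewrite le_blk blk_j !orbT; lia.
Qed.

Lemma block_toeplitz_exponent_le i j : j %/ M <= i %/ M ->
  M * (i %/ M - j %/ M) + i %% M + j %% M <= i + (M - 1).
Proof.
move=> le_blk; rewrite {3}(divn_eq i M) (mulnC (i %/ M)) mulnBr.
have := leq_mul2l M (j %/ M) (i %/ M); have := ltn_pmod j M_gt0.
by rewrite le_blk orbT; move: (M * _) (M * _) (i %% M) (j %% M); lia.
Qed.

End BlockToeplitzExponents.

Section IntPolyEvaluation.
Local Open Scope ring_scope.

Lemma pchar_horner_codom (R : nzRingType) (p D : nat) (a : R) (q : {poly int}) :
  p \in [pchar R] -> (size q <= D)%N ->
  (map_poly intr q).[a] \in codom (fun c : {ffun 'I_D -> 'I_p} => \sum_(i < D) (c i)%:R * a ^+ i).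
Proof.
move=> pcharR size_q; have p_gt0 : (0 < p)%N by rewrite prime_gt0 ?(pcharf_prime pcharR).
have mod_ge0 (z : int) : 0 <= (z %% p)%Z by rewrite modz_ge0 // eqz_nat -lt0n.
have mod_lt (i : 'I_D) : (`|(q`_i %% p)%Z|%N < p)%N.
  by rewrite -ltz_nat gez0_abs ?ltz_pmod ?ltz_nat.
apply/codomP; exists [ffun i => Ordinal (mod_lt i)].
rewrite (horner_coef_wide _ (leq_trans (size_poly _ _) size_q)).
apply: eq_bigr => i _; rewrite ffunE coef_map /=; congr (_ * _).
rewrite {1}(divz_eq q`_i p) rmorphD rmorphM /= -[(p%:Z)%:~R]/(p%:R : R).
by rewrite (pcharf0 pcharR) mulr0 add0r -{1}(gez0_abs (mod_ge0 _)).
Qed.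

(* Every element of [F] is a power of [alpha]; reducing [X ^ i] modulo [P] (possible as its
   leading coefficient is a unit) expresses it with [size P - 1] integer coefficients, which
   only matter modulo [p]. *)
Lemma card_le_pchar_root (F : finFieldType) (p : nat) (alpha : F) (P : {poly int}) :
  p \in [pchar F] -> primitive_element alpha ->
  lead_coef P \is a GRing.unit -> root (map_poly intr P) alpha ->
  (#|F| <= p ^ (size P).-1)%N.
Proof.
move=> pcharF prim unit_lead /rootP P_alpha; set D := (size P).-1.
have P_neq0 : P != 0 by apply: contraTneq unit_lead => ->; rewrite lead_coef0 unitr0.
pose Phi (c : {ffun 'I_D -> 'I_p}) := \sum_(i < D) (c i)%:R * alpha ^+ i.
have span y : y \in codom Phi.
  have [->|y_neq0] := eqVneq y 0.
    by have := @pchar_horner_codom F p D alpha 0 pcharF; rewrite rmorph0 horner0 size_poly0; apply.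
  have y_unity : y ^+ (#|F|.-1) = 1.
    by apply: (mulfI y_neq0); rewrite mulr1 -exprS prednK ?expf_card //; apply/card_gt0P; exists 0.
  have [i ->] := prim_rootP prim y_unity.
  have size_mod : (size ('X^i %% P)%R <= D)%N by rewrite -ltnS prednK ?size_poly_gt0 ?ltn_modp.
  have := pchar_horner_codom alpha pcharF size_mod.
  have -> : 'X^i %% P = 'X^i - 'X^i %/ P * P.
    by rewrite {2}(Pdiv.IdomainUnit.divp_eq unit_lead 'X^i) addrC addKr.
  by rewrite rmorphB rmorphM /= !hornerE P_alpha mulr0 subr0 map_polyXn hornerXn.
apply: (@leq_trans #|codom Phi|).
  by apply/subset_leq_card/subsetP => y _; apply: span.
by rewrite (leq_trans (card_size _)) // size_codom card_ffun !card_ord.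
Qed.

Lemma sum_monomials_top (R : nzRingType) (I : finType) (Q : pred I) (c : I -> R)
    (m : I -> nat) (i0 : I) :
    Q i0 -> c i0 != 0 -> (forall i, Q i -> i != i0 -> (m i < m i0)%N) ->
  let P := \sum_(i | Q i) c i *: 'X^(m i) in size P = (m i0).+1 /\ lead_coef P = c i0.
Proof.
move=> Q_i0 c_i0 m_lt P.
have coef_top : P`_(m i0) = c i0.
  rewrite coef_sumMXn (big_pred1 i0) // => i /=.
  apply/andP/eqP => [[Q_i /eqP m_i]|->]; last by rewrite Q_i0 eqxx.
  by apply/eqP/negPn/negP => /(m_lt i Q_i); rewrite m_i ltnn.
have size_P : size P = (m i0).+1.
  apply/eqP; rewrite eqn_leq; apply/andP; split.
    apply/leq_sizeP => n lt_n; rewrite coef_sumMXn big_pred0 // => i.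
    apply/negbTE/andP => -[Q_i /eqP m_i]; have [i_eq|i_neq] := eqVneq i i0.
      by rewrite -m_i i_eq ltnn in lt_n.
    by have := m_lt i Q_i i_neq; rewrite m_i ltnNge ltnW.
  by rewrite ltnNge; apply: contra c_i0 => /(nth_default 0) <-; rewrite coef_top.
by rewrite lead_coefE size_P.
Qed.

Lemma det_pattern_mx (R : comNzRingType) (r : nat) (supp : 'I_r -> 'I_r -> bool)
    (E : 'I_r -> 'I_r -> nat) (a : R) (A : 'M[R]_r) :
    (forall i j, A i j = if supp i j then a ^+ E i j else 0) ->
  \det A = (map_poly intr
    (\sum_(s | admissible supp s) ((-1) ^+ s : int) *: 'X^(\sum_i E i (s i)))).[a].
Proof.
move=> A_E; rewrite /determinant (bigID (admissible supp)) /= [X in _ + X]big1 ?addr0.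
  rewrite raddf_sum /= horner_sum; apply: eq_bigr => s /forallP adm_s.
  rewrite map_polyZ hornerZ map_polyXn hornerXn rmorph_sign /= -prodrXr.
  by congr (_ * _); apply: eq_bigr => i _; rewrite A_E adm_s.
move=> s /forallPn[i not_supp].
by rewrite (bigD1 i) //= A_E (negbTE not_supp) mul0r mulr0.
Qed.

End IntPolyEvaluation.

Section Exp2PatternDeterminant.
Local Open Scope ring_scope.
Variables (r K : nat) (supp : 'I_r -> 'I_r -> bool) (e : 'I_r -> 'I_r -> nat).
Variables (x w : 'I_r -> nat).
Hypothesis x_incr : forall a b : 'I_r, (a < b)%N -> (x a < x b)%N.
Hypothesis w_inj : injective w.
Hypothesis supp_mono : forall a b c : 'I_r, (a <= b)%N -> supp a c -> supp b c.
Hypothesis e_shift : forall a c, supp a c -> (e a c + K = x a + w c)%N.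

Lemma exp2_sum_lt_max (sm : 'S_r) : admissible supp sm ->
    (forall s, admissible supp s -> (exp2_sum e s <= exp2_sum e sm)%N) ->
  forall s, admissible supp s -> s != sm -> (exp2_sum e s < exp2_sum e sm)%N.
Proof.
have weightE s : admissible supp s ->
    exp2_sum (fun i j => x i + w j) s = (exp2_sum e s * 2 ^ K)%N.
  move=> /forallP adm_s; rewrite /exp2_sum big_distrl; apply: eq_bigr => i _.
  by rewrite /= -expnD e_shift.
move=> adm_sm sm_max s adm_s; apply: contraNT; rewrite -leqNgt => le_sm.
apply/eqP; apply: (max_weight_unique x_incr w_inj supp_mono) => // t adm_t.
  by rewrite !weightE // leq_mul2r (leq_trans (sm_max t adm_t)) ?orbT.
by rewrite !weightE // leq_mul2r sm_max ?orbT.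
Qed.

Lemma det_exp2_pattern_neq0 (F : finFieldType) (p : nat) (alpha : F) (A : 'M[F]_r) (N : nat) :
    p \in [pchar F] -> primitive_element alpha ->
    (forall a c, A a c = if supp a c then alpha ^+ (2 ^ e a c) else 0) ->
    (exists s, admissible supp s) ->
    (forall s, admissible supp s -> (exp2_sum e s < N)%N) ->
  (p ^ N <= #|F|)%N -> \det A != 0.
Proof.
move=> pcharF prim A_E [s0 adm_s0] exp2_sum_lt card_F.
pose sm := [arg max_(s > s0 | admissible supp s) exp2_sum e s].
have [adm_sm sm_max] : admissible supp sm /\
    forall s, admissible supp s -> (exp2_sum e s <= exp2_sum e sm)%N.
  by rewrite /sm; case: arg_maxnP.
have [size_P lead_P] := sum_monomials_top (c := fun s : 'S_r => ((-1) ^+ s : int))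
  adm_sm (negbT (signr_eq0 _ _)) (exp2_sum_lt_max adm_sm sm_max).
rewrite (det_pattern_mx A_E); apply/negP => /eqP/rootP root_P.
have := card_le_pchar_root pcharF prim _ root_P.
rewrite lead_P size_P unitrX ?unitrN1 // => /(_ isT) card_le.
have p_gt1 : (1 < p)%N by rewrite prime_gt1 ?(pcharf_prime pcharF).
by have := leq_trans card_F card_le; rewrite leq_exp2l // leqNgt exp2_sum_lt.
Qed.
End Exp2PatternDeterminant.

Lemma superregular_block_toeplitz (F : finFieldType) (p : nat) (alpha : F) (M L : nat) :
    0 < M -> p \in [pchar F]%R -> primitive_element alpha ->
    p ^ (2 ^ (M * (L + 2) - 1)) <= #|F| ->
  superregular (block_toeplitz alpha M L).
Proof.
move=> M_gt0 pcharF prim card_F r f g f_incr g_incr [s0 s0_nz].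
have [f_inj g_inj] := (incr_ord_inj f_incr, incr_ord_inj g_incr).
pose supp (a c : 'I_r) := g c %/ M <= f a %/ M.
pose e (a c : 'I_r) := M * (f a %/ M - g c %/ M) + f a %% M + g c %% M.
have A_E a c : submx_of f g (block_toeplitz alpha M L) a c =
    if supp a c then (alpha ^+ (2 ^ e a c))%R else 0%R by rewrite !mxE.
apply: (@det_exp2_pattern_neq0 r (M * L) supp e (fun a => f a) (fun c => col_weight M L (g c))
  _ _ _ _ F p alpha _ _ pcharF prim A_E _ _ card_F).
- exact: f_incr.
- by move=> c1 c2 /col_weight_inj eq_w; apply/g_inj/val_inj/eq_w.
- move=> a b c; rewrite leq_eqVlt => /predU1P[/val_inj -> //|lt_ab] le_blk.
  exact/(leq_trans le_blk)/leq_div2r/ltnW/f_incr.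
- by move=> a c le_blk; apply: block_toeplitz_exponent_shift.
- exists s0; apply/forallP => i; apply: contraNT (s0_nz i) => not_supp.
  by rewrite A_E (negbTE not_supp).
- move=> s /forallP adm_s; rewrite addn2 mulnC mulSnr -addnBA //.
  rewrite /exp2_sum; apply: (sum_exp2_inj_lt (E := fun i => e i (s i)) f_inj) => i.
  exact: block_toeplitz_exponent_le M_gt0 _ _ (adm_s i).
Qed.

Theorem theorem3p2 (n k delta : nat) (F : finFieldType) (p : nat) (alpha : F) :
  (0 < n)%N -> (0 < k)%N -> (0 < delta)%N -> (k < n)%N -> ((n - k) %| delta)%N ->
  p \in [pchar F]%R ->
  primitive_element alpha ->
  let M := maxn (n - k) k in
  let L := (delta %/ k + delta %/ (n - k))%N in
  (p ^ (2 ^ (M * (L + 2) - 1)) <= #|F|)%N ->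
  superregular (block_toeplitz alpha M L).
Proof.
move=> _ k_gt0 _ _ _ pcharF prim M L card_F.
apply: (superregular_block_toeplitz _ pcharF prim card_F).
by rewrite /M leq_max k_gt0 orbT.
Qed.
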